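(* Let $F$ be a smoothed envelope distribution in $\mathrm{MDA}(\gamma)$ with $\gamma\ge0$ and unbounded support, let $G$ be a distribution on $\mathbb N_+$ with $\overline G\le\overline F$, let $X\sim G$, and for $u\ge1$ define $$\Sigma(u)=\mathbb E\big[\mathbb I\{X>u\}\log(1+X-u)\big].$$ Then for every $\epsilon>0$ there exists $t_0$ (depending on $\epsilon$ and $F$) such that for all $t>t_0$ and all $u\ge 1$, $$\Sigma(u)\le \overline G(u)\log t+\Big(\frac{\gamma}{\ln 2}+\epsilon\Big)\overline F(t).$$
   Context: $\log$ is base 2 and $\ln$ is natural log. A smoothed envelope distribution is a c.d.f. $F$ on $\mathbb R_+$ with continuous derivative; $\overline F=1-F$, $\overline G=1-G$, $U(t)=\overline F^{-1}(1/t)$, and $F\in\mathrm{MDA}(\gamma)$ means there exist $A_n>0$ with $F^n(A_nx+U(n))\to\exp(-(1+\gamma x)^{-1/\gamma})$ (interpreted as $\exp(-e^{-x})$ when $\gamma=0$) for all $x$ with $1+\gamma x>0$. ($\overline G\le\overline F$ holds when $G$ is the marginal of a source in the envelope class defined by $F$.) *)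

From Stdlib Require Import Reals.
From Coquelicot Require Import Coquelicot.
Open Scope R_scope.

Definition log2 (x : R) : R := ln x / ln 2.

Record smoothed_envelope (F : R -> R) : Prop := {
  se_support : forall x, x < 0 -> F x = 0;
  se_mono : forall x y, x <= y -> F x <= F y;
  se_range : forall x, 0 <= F x <= 1;
  se_lim : is_lim F p_infty 1;
  se_cont : forall x, continuous F x;
  se_deriv : exists f : R -> R,
      forall x, 0 < x -> is_derive F x (f x) /\ continuous f x
}.

Definition Fbar (F : R -> R) (x : R) : R := 1 - F x.

(* U(t) = Fbar^{-1}(1/t), taken as the generalized (left-continuous) inverse
   inf { x | Fbar x <= 1/t }. *)
Definition U (F : R -> R) (t : R) : R :=
  real (Glb_Rbar (fun x => Fbar F x <= / t)).

Definition gev (gamma x : R) : R :=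
  if Req_EM_T gamma 0 then exp (- exp (- x))
  else exp (- Rpower (1 + gamma * x) (- / gamma)).

Definition MDA (F : R -> R) (gamma : R) : Prop :=
  exists A : nat -> R, (forall n, 0 < A n) /\
    forall x, 0 < 1 + gamma * x ->
      is_lim_seq (fun n => (F (A n * x + U F (INR n))) ^ n) (gev gamma x).

Definition pmf_Nplus (p : nat -> R) : Prop :=
  p 0%nat = 0 /\ (forall k, 0 <= p k) /\ is_series p 1.

Definition Gbar (p : nat -> R) (x : R) : R :=
  Series (fun k => if Rlt_dec x (INR k) then p k else 0).

(* Sigma(u) = E[ 1{X > u} log(1 + X - u) ], an extended real (limit of the
   nondecreasing partial sums). *)
Definition Sigma (p : nat -> R) (u : R) : Rbar :=
  Lim_seq (fun N => sum_n (fun k =>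
     if Rlt_dec u (INR k) then p k * log2 (1 + INR k - u) else 0) N).

From Stdlib Require Import Reals Lra Lia.
From Coquelicot Require Import Coquelicot.
Open Scope R_scope.

(* Comparing the MDA limits at a point [x' < 0] (where a positive limit of
   [F^n] forces [A_n x' + U(n) >= 0], so [A_n <= U(n) / -x']) and at a point
   [x > 0] yields a geometric contraction of the tail beyond some [s0]:
   [Fbar (e^L s) <= c Fbar s], with [L / (1 - c)] as close to [gamma] as we like.
   For [X > u], [log (1 + X - u) <= log X <= log t + (L / ln 2) N], where [N]
   counts the grid points [t e^(jL)] below [X]; taking expectations,
   [E N = sum_j Gbar (t e^(jL)) <= sum_j c^j Fbar t = Fbar t / (1 - c)]. *)

Lemma partial_tail_le_Gbar (p : nat -> R) (y : R) (N : nat) : pmf_Nplus p ->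
  sum_n (fun k => if Rlt_dec y (INR k) then p k else 0) N <= Gbar p y.
Proof.
  intros [_ [Hp Hs]].
  set (a := fun k => if Rlt_dec y (INR k) then p k else 0).
  assert (Ha : forall k, 0 <= a k <= p k).
  { intro k; unfold a; destruct (Rlt_dec y (INR k)); split; try lra; apply Hp. }
  apply is_lim_seq_incr_compare.
  - apply Series_correct, (ex_series_le a p); [|now exists 1].
    intro k; rewrite Rabs_pos_eq; apply Ha.
  - intro n; rewrite sum_Sn; specialize (Ha (S n)).
    change (sum_n a n <= sum_n a n + a (S n)); lra.
Qed.

Lemma gev_pos (gamma x : R) : 0 < gev gamma x.
Proof. unfold gev; destruct (Req_EM_T gamma 0); apply exp_pos. Qed.

Lemma pow_one_minus_le_exp (a : R) (n : nat) : 0 <= a <= 1 ->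
  (1 - a) ^ n <= exp (- (INR n * a)).
Proof.
  intros Ha; induction n as [|n IH].
  - simpl; rewrite Rmult_0_l, Ropp_0, exp_0; lra.
  - rewrite S_INR; simpl pow.
    replace (- ((INR n + 1) * a)) with (- a + - (INR n * a)) by ring.
    rewrite exp_plus.
    apply Rmult_le_compat; try lra.
    + apply pow_le; lra.
    + pose proof (exp_ineq1_le (- a)); lra.
Qed.

Lemma mda_level_eventually_nonneg (F : R -> R) (gamma : R) (A : nat -> R) (x : R) :
  smoothed_envelope F ->
  is_lim_seq (fun n => F (A n * x + U F (INR n)) ^ n) (gev gamma x) ->
  eventually (fun n => 0 <= A n * x + U F (INR n)).
Proof.
  intros HF Hl; apply is_lim_seq_spec in Hl.
  destruct (Hl (mkposreal _ (gev_pos gamma x))) as [N HN].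
  exists (S N); intros n Hn.
  destruct (Rle_dec 0 (A n * x + U F (INR n))) as [h|h]; [exact h|exfalso].
  specialize (HN n ltac:(lia)); simpl in HN.
  rewrite (se_support F HF) in HN by lra.
  destruct n as [|n]; [lia|].
  rewrite pow_i, Rminus_0_l, Rabs_Ropp, Rabs_pos_eq in HN by (lia || apply Rlt_le, gev_pos).
  lra.
Qed.

Lemma mda_level_eventually_tail_le (F : R -> R) (gamma : R) (A : nat -> R) (x H e : R) :
  smoothed_envelope F ->
  is_lim_seq (fun n => F (A n * x + U F (INR n)) ^ n) (gev gamma x) ->
  gev gamma x = exp (- H) -> 0 < e ->
  eventually (fun n => INR n * Fbar F (A n * x + U F (INR n)) <= H + e).
Proof.
  intros HF Hl Hg He; apply is_lim_seq_spec in Hl.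
  assert (Hd : 0 < exp (- H) - exp (- (H + e))).
  { assert (exp (- (H + e)) < exp (- H)) by (apply exp_increasing; lra); lra. }
  destruct (Hl (mkposreal _ Hd)) as [N HN].
  exists N; intros n Hn; specialize (HN n Hn); simpl in HN; rewrite Hg in HN.
  apply Rabs_lt_between in HN.
  set (y := A n * x + U F (INR n)) in *.
  pose proof (se_range F HF y) as Hr.
  pose proof (pow_one_minus_le_exp (Fbar F y) n) as Hp.
  unfold Fbar in *; replace (1 - (1 - F y)) with (F y) in Hp by ring.
  specialize (Hp ltac:(lra)).
  assert (Hlt : exp (- (H + e)) < exp (- (INR n * (1 - F y)))) by lra.
  apply exp_lt_inv in Hlt; lra.
Qed.

Lemma U_nonneg_le (F : R -> R) (n s : R) : smoothed_envelope F -> 1 < n ->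
  Fbar F s <= / n -> 0 <= U F n <= s.
Proof.
  intros HF Hn Hs.
  destruct (Glb_Rbar_correct (fun x => Fbar F x <= / n)) as [Hlb Hglb].
  assert (Hle : Rbar_le (Glb_Rbar (fun x => Fbar F x <= / n)) s) by (apply Hlb; exact Hs).
  assert (Hge : Rbar_le 0 (Glb_Rbar (fun x => Fbar F x <= / n))).
  { apply Hglb; intros z Hz; simpl.
    destruct (Rle_dec 0 z) as [h|h]; [exact h|exfalso].
    unfold Fbar in Hz; rewrite (se_support F HF) in Hz by lra.
    assert (/ n < / 1) by (apply Rinv_lt_contravar; lra).
    rewrite Rinv_1 in *; lra. }
  unfold U; destruct (Glb_Rbar (fun x => Fbar F x <= / n)); simpl in *; tauto.
Qed.

(* [n] is the integer part of [/ Fbar F s]. *)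
Lemma Fbar_between_inverses (F : R -> R) (N : nat) :
  smoothed_envelope F -> (forall x, F x < 1) ->
  exists s1, forall s, s1 <= s ->
    exists n : nat, (N <= n)%nat /\ / (INR n + 1) < Fbar F s <= / INR n.
Proof.
  intros HF Hlt.
  assert (HN : 0 < INR N + 1) by (pose proof (pos_INR N); lra).
  destruct (proj2 (is_lim_spec F p_infty 1) (se_lim F HF) (mkposreal _ (Rinv_0_lt_compat _ HN)))
    as [M HM].
  exists (M + 1); intros s Hs.
  specialize (HM s ltac:(lra)); simpl in HM; apply Rabs_lt_between in HM.
  assert (Hpos : 0 < Fbar F s) by (unfold Fbar; specialize (Hlt s); lra).
  assert (Hsmall : Fbar F s < / (INR N + 1)) by (unfold Fbar; lra).
  destruct (nfloor_ex (/ Fbar F s)) as [n [Hn1 Hn2]]; [apply Rlt_le, Rinv_0_lt_compat, Hpos|].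
  assert (HNn : INR N + 1 < / Fbar F s).
  { rewrite <- (Rinv_inv (INR N + 1)); apply Rinv_lt_contravar; [|exact Hsmall].
    apply Rmult_lt_0_compat; [|apply Rinv_0_lt_compat]; lra. }
  exists n; split; [apply INR_le; lra|split].
  - rewrite <- (Rinv_inv (Fbar F s)); apply Rinv_lt_contravar; [|exact Hn2].
    apply Rmult_lt_0_compat; [apply Rinv_0_lt_compat|]; lra.
  - pose proof (pos_INR N).
    rewrite <- (Rinv_inv (Fbar F s)); apply Rinv_le_contravar; lra.
Qed.

(* With [n ~ 1 / Fbar F s], the MDA levels satisfy [0 <= A n * x' + U n] and
   [U n <= s], so the level at [x] is below [(1 + L) s <= e^L s], where the tail
   is at most [(H + e) / n], i.e. about [H Fbar F s]. *)
Lemma mda_tail_contraction (F : R -> R) (gamma : R) (A : nat -> R) (x' x L H c : R) :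
  smoothed_envelope F -> (forall x, F x < 1) -> (forall n, 0 < A n) ->
  is_lim_seq (fun n => F (A n * x' + U F (INR n)) ^ n) (gev gamma x') ->
  is_lim_seq (fun n => F (A n * x + U F (INR n)) ^ n) (gev gamma x) ->
  x' < 0 -> 0 < x -> x <= L * - x' ->
  gev gamma x = exp (- H) -> 0 < H < c ->
  exists s0, forall s, s0 <= s -> Fbar F (exp L * s) <= c * Fbar F s.
Proof.
  intros HF Hlt HA Hl' Hl Hx' Hx HxL Hg [HH Hc].
  set (e := (c - H) / 2).
  assert (He : 0 < e) by (unfold e; lra).
  destruct (mda_level_eventually_tail_le F gamma A x H e HF Hl Hg He) as [N1 HN1].
  destruct (mda_level_eventually_nonneg F gamma A x' HF Hl') as [N2 HN2].
  destruct (nfloor_ex ((H + e) / e)) as [N3 HN3]; [apply Rlt_le, Rdiv_lt_0_compat; lra|].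
  destruct (Fbar_between_inverses F (N1 + N2 + N3 + 2) HF Hlt) as [s0 Hs0].
  exists s0; intros s Hs; destruct (Hs0 s Hs) as [n [Hn [Hlow Hup]]].
  assert (Hn1 : 1 < INR n) by (replace 1 with (INR 1) by reflexivity; apply lt_INR; lia).
  assert (HN3n : INR N3 + 1 <= INR n) by (rewrite <- S_INR; apply le_INR; lia).
  destruct (U_nonneg_le F (INR n) s HF Hn1 Hup) as [HU0 HUs].
  specialize (HN1 n ltac:(lia)); specialize (HN2 n ltac:(lia)); specialize (HA n).
  set (Un := U F (INR n)) in *.
  assert (Hlevel : A n * x + Un <= exp L * s).
  { assert (A n * x <= L * Un).
    { apply Rle_trans with (A n * (L * - x')); [apply Rmult_le_compat_l; lra|nra]. }
    assert (HL : 0 < L) by nra.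
    pose proof (exp_ineq1_le L).
    assert ((1 + L) * Un <= (1 + L) * s) by (apply Rmult_le_compat_l; lra).
    assert ((1 + L) * s <= exp L * s) by (apply Rmult_le_compat_r; lra).
    lra. }
  assert (Hmono := se_mono F HF _ _ Hlevel).
  set (X := Fbar F (exp L * s)).
  assert (HX : INR n * X <= H + e).
  { apply Rle_trans with (2 := HN1), Rmult_le_compat_l; [lra|unfold X, Fbar; lra]. }
  assert (Hlarge : H + e <= e * INR n).
  { replace (H + e) with (e * ((H + e) / e)) by (field; lra).
    apply Rmult_le_compat_l; lra. }
  assert (HXc : (INR n + 1) * X <= c).
  { apply Rmult_le_reg_l with (INR n); [lra|]. unfold e in *; nra. }
  assert (Hs1 : 1 < (INR n + 1) * Fbar F s).
  { apply Rmult_lt_compat_l with (r := INR n + 1) in Hlow; [|lra].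
    rewrite Rinv_r in Hlow by lra; exact Hlow. }
  nra.
Qed.

Lemma ln_1_plus_ge (y : R) : 0 < y -> y / (1 + y) <= ln (1 + y).
Proof.
  intro Hy.
  assert (Hw : 0 < / (1 + y)) by (apply Rinv_0_lt_compat; lra).
  assert (Hln : ln (/ (1 + y)) <= / (1 + y) - 1).
  { rewrite <- (ln_exp (/ (1 + y) - 1)); apply ln_le; [exact Hw|].
    pose proof (exp_ineq1_le (/ (1 + y) - 1)); lra. }
  rewrite ln_Rinv in Hln by lra.
  replace (y / (1 + y)) with (1 - / (1 + y)) by (field; lra); lra.
Qed.

(* Writing [gev gamma x = exp (- H)], [H] is [(1 + gamma x)^(-1/gamma)]
   (or [e^-x] for [gamma = 0]). *)
Lemma gev_eq_exp_neg (gamma x : R) : 0 <= gamma -> 0 < x ->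
  exists H, 0 < H <= (1 + gamma * x) / (1 + (1 + gamma) * x) /\ gev gamma x = exp (- H).
Proof.
  intros Hg Hx.
  assert (Hz : exists z, x / (1 + gamma * x) <= z /\ gev gamma x = exp (- exp (- z))).
  { unfold gev; destruct (Req_EM_T gamma 0) as [H0|H0].
    - exists x; split; [subst; unfold Rdiv; rewrite Rmult_0_l, Rplus_0_r, Rinv_1; lra|reflexivity].
    - exists (ln (1 + gamma * x) / gamma); split.
      + apply Rmult_le_reg_l with gamma; [lra|].
        replace (gamma * (ln (1 + gamma * x) / gamma)) with (ln (1 + gamma * x)) by (field; lra).
        replace (gamma * (x / (1 + gamma * x))) with (gamma * x / (1 + gamma * x)) by (field; nra).
        apply ln_1_plus_ge; nra.
      + unfold Rpower; do 3 f_equal; field; lra. }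
  destruct Hz as [z [Hz Hgev]].
  exists (exp (- z)); split; [split; [apply exp_pos|]|exact Hgev].
  assert (Hgx : 0 < 1 + gamma * x) by nra.
  assert (Hz0 : 0 < z) by (apply Rlt_le_trans with (2 := Hz), Rdiv_lt_0_compat; lra).
  rewrite exp_Ropp; apply Rle_trans with (/ (1 + z)).
  { apply Rinv_le_contravar; [lra|apply exp_ineq1_le]. }
  replace ((1 + gamma * x) / (1 + (1 + gamma) * x)) with (/ (1 + x / (1 + gamma * x)))
    by (field; nra).
  assert (0 < x / (1 + gamma * x)) by (apply Rdiv_lt_0_compat; lra).
  apply Rinv_le_contravar; lra.
Qed.

Lemma mda_tail_contraction_near_gamma (F : R -> R) (gamma d : R) :
  smoothed_envelope F -> MDA F gamma -> 0 <= gamma -> (forall x, F x < 1) -> 0 < d ->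
  exists L c s0, 0 < L /\ 0 < c < 1 /\ L <= (gamma + d) * (1 - c) /\
    forall s, s0 <= s -> Fbar F (exp L * s) <= c * Fbar F s.
Proof.
  intros HF [A [HA HM]] Hg Hlt Hd.
  (* Apply the contraction to [x' = -m] and [x = L m]: [m < 1 / gamma] keeps
     [x'] in the domain, and [L (1 + gamma) = d / 4] leaves room for [H < c]. *)
  set (m := / (gamma + d / 2)); set (L := d / (4 * (gamma + 1)));
    set (c := 1 - L / (gamma + d)).
  assert (Hm : m * (gamma + d / 2) = 1) by (unfold m; field; lra).
  assert (HL : L * (1 + gamma) = d / 4) by (unfold L; field; lra).
  assert (Hm0 : 0 < m) by (unfold m; apply Rinv_0_lt_compat; lra).
  assert (HL0 : 0 < L) by (unfold L; apply Rdiv_lt_0_compat; lra).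
  assert (Hc0 : 0 < L / (gamma + d)) by (apply Rdiv_lt_0_compat; lra).
  assert (Hc : L / (gamma + d) < 1).
  { apply Rmult_lt_reg_r with (gamma + d); [lra|].
    unfold Rdiv; rewrite Rmult_assoc, Rinv_l, Rmult_1_r by lra; nra. }
  assert (HLm : 0 < L * m) by (apply Rmult_lt_0_compat; lra).
  destruct (gev_eq_exp_neg gamma (L * m) Hg HLm) as [H [[HH0 HHc] Hgev]].
  assert (Hden : 0 < 1 + (1 + gamma) * (L * m))
    by (pose proof (Rmult_le_pos _ _ Hg (Rlt_le _ _ HLm)); lra).
  assert (HHlt : H < c).
  { apply Rle_lt_trans with (1 := HHc); unfold c.
    apply Rmult_lt_reg_r with ((1 + (1 + gamma) * (L * m)) * (gamma + d));
      [apply Rmult_lt_0_compat; lra|].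
    field_simplify; [|lra|lra].
    pose proof (f_equal (Rmult L) Hm); pose proof (f_equal (Rmult (L * m)) HL).
    assert (0 < L * m * d) by (apply Rmult_lt_0_compat; lra).
    nra. }
  destruct (mda_tail_contraction F gamma A (- m) (L * m) L H c HF Hlt HA
              (HM (- m) ltac:(nra)) (HM (L * m) ltac:(nra)) ltac:(lra) HLm ltac:(lra)
              Hgev (conj HH0 HHlt)) as [s0 Hs0].
  exists L, c, s0; split; [lra|split; [unfold c; split; lra|split; [|exact Hs0]]].
  unfold c; right; field; lra.
Qed.

Definition grid (t L : R) (j : nat) : R := t * exp (INR j * L).

Fixpoint grid_count (x t L : R) (J : nat) : R :=
  match J with
  | O => 0
  | S J => grid_count x t L J + (if Rlt_dec (grid t L J) x then 1 else 0)
  end.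

Lemma grid_S (t L : R) (j : nat) : grid t L (S j) = exp L * grid t L j.
Proof.
  unfold grid; rewrite S_INR, Rmult_plus_distr_r, Rmult_1_l, exp_plus; ring.
Qed.

Lemma grid_unbounded (t L M : R) : 1 <= t -> 0 < L -> exists J, M <= grid t L J.
Proof.
  intros Ht HL.
  destruct (nfloor_ex (Rmax 0 M / L)) as [J [_ HJ]];
    [apply Rdiv_le_0_compat; [apply Rmax_l|exact HL]|].
  exists (S J); unfold grid; rewrite S_INR.
  assert (HM : Rmax 0 M < (INR J + 1) * L).
  { apply Rmult_lt_reg_r with (/ L); [apply Rinv_0_lt_compat, HL|].
    rewrite Rmult_assoc, Rinv_r, Rmult_1_r by lra; exact HJ. }
  pose proof (exp_ineq1_le ((INR J + 1) * L)); pose proof (Rmax_l 0 M); pose proof (Rmax_r 0 M).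
  nra.
Qed.

Lemma grid_count_nonneg (x t L : R) (J : nat) : 0 <= grid_count x t L J.
Proof. induction J; simpl; [lra|destruct (Rlt_dec _ _); lra]. Qed.

Lemma Rmin_le_grid_count (x t L : R) (J : nat) :
  Rmin x (grid t L J) <= t * exp (L * grid_count x t L J).
Proof.
  induction J as [|J IH]; simpl.
  - unfold grid; simpl; rewrite Rmult_0_l, Rmult_0_r, exp_0, Rmult_1_r; apply Rmin_r.
  - destruct (Rlt_dec (grid t L J) x) as [h|h].
    + rewrite Rmin_right in IH by lra.
      rewrite Rmult_plus_distr_l, Rmult_1_r, exp_plus.
      apply Rle_trans with (grid t L (S J)); [apply Rmin_r|].
      rewrite grid_S; pose proof (exp_pos L); nra.
    + rewrite Rplus_0_r; rewrite Rmin_left in IH by lra.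
      apply Rle_trans with x; [apply Rmin_l|exact IH].
Qed.

Lemma log2_shift_le_grid_count (x t L u : R) (J : nat) :
  0 < t -> 1 <= u < x -> x <= grid t L J ->
  log2 (1 + x - u) <= log2 t + grid_count x t L J * (L / ln 2).
Proof.
  intros Ht Hu Hx.
  assert (Hln2 : 0 < ln 2) by (rewrite <- ln_1; apply ln_increasing; lra).
  pose proof (Rmin_le_grid_count x t L J) as Hc; rewrite Rmin_left in Hc by exact Hx.
  assert (Hln : ln (1 + x - u) <= ln t + L * grid_count x t L J).
  { rewrite <- (ln_exp (L * grid_count x t L J)), <- ln_mult by (apply exp_pos || lra).
    apply ln_le; lra. }
  unfold log2; apply Rmult_le_reg_r with (ln 2); [exact Hln2|].
  field_simplify; lra.
Qed.

Lemma Fbar_grid_le (F : R -> R) (L c s0 t : R) :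
  0 <= t -> s0 <= t -> 0 <= L -> 0 <= c ->
  (forall s, s0 <= s -> Fbar F (exp L * s) <= c * Fbar F s) ->
  forall j, Fbar F (grid t L j) <= c ^ j * Fbar F t.
Proof.
  intros Ht Hs HL Hc Hcon j; induction j as [|j IH].
  - unfold grid; simpl; rewrite Rmult_0_l, exp_0, Rmult_1_r; lra.
  - rewrite grid_S; simpl pow.
    assert (Hge : s0 <= grid t L j).
    { unfold grid; pose proof (exp_ineq1_le (INR j * L)); pose proof (pos_INR j).
      assert (0 <= INR j * L) by nra; nra. }
    apply Rle_trans with (c * Fbar F (grid t L j)); [apply Hcon, Hge|].
    rewrite Rmult_assoc; apply Rmult_le_compat_l; lra.
Qed.

(* Exchanging the sums over [k] and [j], the left-hand side is at most
   [sum_(j < J) Gbar p (grid t L j)]. *)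
Lemma partial_expected_grid_count_le (p : nat -> R) (t L a c : R) (N J : nat) :
  pmf_Nplus p -> c <> 1 -> (forall j, Gbar p (grid t L j) <= c ^ j * a) ->
  sum_n (fun k => p k * grid_count (INR k) t L J) N <= a * (1 - c ^ J) / (1 - c).
Proof.
  intros Hp Hc HG; induction J as [|J IH].
  - rewrite (sum_n_ext _ (fun _ => 0)) by (intro; simpl; apply Rmult_0_r).
    rewrite sum_n_const; simpl; unfold Rdiv; rewrite Rminus_diag; lra.
  - simpl grid_count.
    rewrite (sum_n_ext _ (fun k => plus (p k * grid_count (INR k) t L J)
               (if Rlt_dec (grid t L J) (INR k) then p k else 0)))
      by (intro k; unfold plus; simpl; destruct (Rlt_dec _ _); ring).
    rewrite sum_n_plus.
    apply Rle_trans with (a * (1 - c ^ J) / (1 - c) + c ^ J * a); [|right; simpl; field; lra].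
    apply Rplus_le_compat; [exact IH|].
    apply Rle_trans with (2 := HG J), partial_tail_le_Gbar, Hp.
Qed.

Lemma sum_n_le_range (a b : nat -> R) (N : nat) :
  (forall k, (k <= N)%nat -> a k <= b k) -> sum_n a N <= sum_n b N.
Proof.
  induction N as [|N IH]; intro H.
  - rewrite !sum_O; apply H; lia.
  - rewrite !sum_Sn; apply Rplus_le_compat; [apply IH; intros; apply H|apply H]; lia.
Qed.

Lemma Sigma_partial_sum_le (p : nat -> R) (t L a c u : R) (N : nat) :
  pmf_Nplus p -> 1 <= t -> 1 <= u -> 0 < L -> 0 <= a -> 0 <= c < 1 ->
  (forall j, Gbar p (grid t L j) <= c ^ j * a) ->
  sum_n (fun k => if Rlt_dec u (INR k) then p k * log2 (1 + INR k - u) else 0) N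
    <= Gbar p u * log2 t + L / ((1 - c) * ln 2) * a.
Proof.
  intros Hp Ht Hu HL Ha Hc HG.
  assert (Hln2 : 0 < ln 2) by (rewrite <- ln_1; apply ln_increasing; lra).
  assert (Hlog2t : 0 <= log2 t)
    by (unfold log2; apply Rdiv_le_0_compat; [rewrite <- ln_1; apply ln_le|]; lra).
  destruct (grid_unbounded t L (INR N) Ht HL) as [J HJ].
  set (count := fun k => grid_count (INR k) t L J).
  apply Rle_trans with (sum_n (fun k => plus
      ((if Rlt_dec u (INR k) then p k else 0) * log2 t) (p k * count k * (L / ln 2))) N).
  - apply sum_n_le_range; intros k Hk; unfold plus; simpl.
    pose proof (proj1 (proj2 Hp) k) as Hpk.
    pose proof (grid_count_nonneg (INR k) t L J) as Hcount.
    assert (HLl : 0 < L / ln 2) by (apply Rdiv_lt_0_compat; lra).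
    unfold count; destruct (Rlt_dec u (INR k)) as [h|h].
    + assert (Hk' : INR k <= grid t L J) by (apply Rle_trans with (2 := HJ), le_INR, Hk).
      pose proof (log2_shift_le_grid_count (INR k) t L u J ltac:(lra) (conj Hu h) Hk').
      replace (p k * grid_count (INR k) t L J * (L / ln 2))
        with (p k * (grid_count (INR k) t L J * (L / ln 2))) by ring.
      rewrite <- Rmult_plus_distr_l; apply Rmult_le_compat_l; lra.
    + assert (0 <= p k * grid_count (INR k) t L J * (L / ln 2)) by
        (apply Rmult_le_pos; [apply Rmult_le_pos|]; lra).
      lra.
  - rewrite sum_n_plus.
    rewrite (sum_n_mult_r (K := R_Ring) (log2 t)), (sum_n_mult_r (K := R_Ring) (L / ln 2)).
    apply Rplus_le_compat.
    + apply Rmult_le_compat_r; [exact Hlog2t|apply partial_tail_le_Gbar, Hp].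
    + pose proof (partial_expected_grid_count_le p t L a c N J Hp ltac:(lra) HG) as HQ.
      fold count in HQ.
      assert (HcJ : 0 <= c ^ J) by (apply pow_le; lra).
      assert (HQ' : sum_n (fun k => p k * count k) N <= a / (1 - c)).
      { apply Rle_trans with (1 := HQ); unfold Rdiv.
        apply Rmult_le_compat_r; [apply Rlt_le, Rinv_0_lt_compat; lra|nra]. }
      replace (L / ((1 - c) * ln 2) * a) with (a / (1 - c) * (L / ln 2)) by (field; lra).
      apply Rmult_le_compat_r; [apply Rlt_le, Rdiv_lt_0_compat; lra|exact HQ'].
Qed.

Theorem lemma3 (F : R -> R) (gamma : R) :
  smoothed_envelope F -> MDA F gamma -> 0 <= gamma ->
  (forall x, F x < 1) ->
  forall eps, 0 < eps ->
  exists t0 : R, forall p : nat -> R, pmf_Nplus p ->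
    (forall x, Gbar p x <= Fbar F x) ->
    forall t, t0 < t -> forall u, 1 <= u ->
      Rbar_le (Sigma p u) (Gbar p u * log2 t + (gamma / ln 2 + eps) * Fbar F t).
Proof.
  intros HF HM Hg Hlt eps Heps.
  assert (Hln2 : 0 < ln 2) by (rewrite <- ln_1; apply ln_increasing; lra).
  destruct (mda_tail_contraction_near_gamma F gamma (eps * ln 2) HF HM Hg Hlt ltac:(nra))
    as [L [c [s0 [HL [Hc [HLc Hcon]]]]]].
  exists (Rmax s0 1); intros p Hp HG t Ht u Hu.
  pose proof (Rmax_l s0 1); pose proof (Rmax_r s0 1).
  assert (HFt : 0 <= Fbar F t) by (unfold Fbar; pose proof (se_range F HF t); lra).
  assert (Hgrid : forall j, Gbar p (grid t L j) <= c ^ j * Fbar F t).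
  { intro j; apply Rle_trans with (1 := HG _), (Fbar_grid_le F L c s0); lra || exact Hcon. }
  unfold Sigma; rewrite <- Lim_seq_const; apply Lim_seq_le_loc; exists 0%nat; intros N _.
  apply Rle_trans with (1 := Sigma_partial_sum_le p t L (Fbar F t) c u N
                               Hp ltac:(lra) Hu HL HFt ltac:(lra) Hgrid).
  apply Rplus_le_compat_l, Rmult_le_compat_r; [exact HFt|].
  replace (gamma / ln 2 + eps) with ((gamma + eps * ln 2) / ln 2) by (field; lra).
  unfold Rdiv; rewrite Rinv_mult, <- Rmult_assoc.
  apply Rmult_le_compat_r; [apply Rlt_le, Rinv_0_lt_compat, Hln2|].
  apply Rmult_le_reg_r with (1 - c); [lra|].
  rewrite Rmult_assoc, Rinv_l, Rmult_1_r by lra; lra.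
Qed.
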